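(* In the extended twisted super Yangian $\widetilde{\mathscr B}_{\mathbf s,\boldsymbol\varepsilon}$ the product $B(u)B(-u)$ is a scalar matrix: $B(u)B(-u)=f(u)\cdot 1$, where $f(u)$ is a power series in $u^{-2}$ whose coefficients are central in $\widetilde{\mathscr B}_{\mathbf s,\boldsymbol\varepsilon}$.
   Context: Fix integers $m,n\ge 0$, $\kappa=m+n$, a parity sequence $\mathbf s=(s_1,\dots,s_\kappa)\in\{\pm1\}^\kappa$ with exactly $m$ entries equal to $1$, and write $|i|\in\mathbb Z_2$ with $s_i=(-1)^{|i|}$. Let $V=\mathbb C^{m|n}$ have basis $v_i$ of parity $|i|$ and matrix units $E_{ij}$. Fix $\boldsymbol\varepsilon=(\varepsilon_1,\dots,\varepsilon_\kappa)\in\{\pm1\}^\kappa$. Let $\mathcal P=\sum_{i,j}s_jE_{ij}\otimes E_{ji}\in\mathrm{End}(V\otimes V)$ and $R(u)=1-\mathcal P/u$. The extended twisted super Yangian $\widetilde{\mathscr B}_{\mathbf s,\boldsymbol\varepsilon}$ is the unital associative superalgebra generated by $b_{ij}^{(r)}$ ($1\le i,j\le\kappa$, $r\ge1$) of parity $|i|+|j|$, with $b_{ij}(u)=\delta_{ij}\varepsilon_i+\sum_{r\ge1}b_{ij}^{(r)}u^{-r}$, $B(u)=\sum_{i,j}(-1)^{|i||j|+|j|}b_{ij}(u)\otimes E_{ij}$, subject only to the reflection equation $R(u-v)B_1(u)R(u+v)B_2(v)=B_2(v)R(u+v)B_1(u)R(u-v)$ (with $B_1,B_2$ acting in the first, resp.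 second, tensor factor of $\mathrm{End}(V)^{\otimes 2}$, usual super sign conventions). (The twisted super Yangian $\mathscr B_{\mathbf s,\boldsymbol\varepsilon}$ is its quotient by the unitary condition $B(u)B(-u)=1$.) *)

From mathcomp Require Import all_boot all_algebra.
From mathcomp Require Import reals complex Rstruct.

Set Implicit Arguments.
Unset Strict Implicit.
Unset Printing Implicit Defensive.

Import GRing.Theory.
Local Open Scope ring_scope.

Notation CC := (Rdefinitions.R)[i].

Section SuperYangian.
Variables (A : ringType) (kappa : nat).
(* par i = |i| (true = odd), i.e. s_i = (-1)^{|i|} *)
Variable par : 'I_kappa -> bool.

Definition sgn (b : bool) : A := (-1) ^+ b.

(* Even elements of A (x) End(V) are represented by their coefficient
   functions X i j  (X = sum_{i,j} X i j (x) E_ij); the coefficient X i j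
   has parity |i|+|j|.  Super product:
   (a (x) E_ik)(a' (x) E_kj) = (-1)^{(|i|+|k|)|a'|} a a' (x) E_ij,
   with |a'| = |k| + |j|. *)
Definition mul2 (X Y : 'I_kappa -> 'I_kappa -> A) (i j : 'I_kappa) : A :=
  \sum_(k < kappa) sgn ((par i (+) par k) && (par k (+) par j)) * X i k * Y k j.

(* Even elements of A (x) End(V) (x) End(V): X i j k l is the coefficient of
   E_ij (x) E_kl (of parity |i|+|j|+|k|+|l|).  Super product:
   (a (x) x (x) y)(a' (x) x' (x) y') =
     (-1)^{|a'|(|x|+|y|) + |y||x'|} a a' (x) x x' (x) y y'. *)
Definition mul4 (X Y : 'I_kappa -> 'I_kappa -> 'I_kappa -> 'I_kappa -> A)
  (i j k l : 'I_kappa) : A :=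
  \sum_(p < kappa) \sum_(q < kappa)
    sgn (((par i (+) par p (+) par k (+) par q)
           && (par p (+) par j (+) par q (+) par l))
         (+) ((par k (+) par q) && (par p (+) par j)))
    * X i p k q * Y p j q l.

Definition add4 (X Y : 'I_kappa -> 'I_kappa -> 'I_kappa -> 'I_kappa -> A) :=
  fun i j k l => X i j k l + Y i j k l.
Definition sub4 (X Y : 'I_kappa -> 'I_kappa -> 'I_kappa -> 'I_kappa -> A) :=
  fun i j k l => X i j k l - Y i j k l.

(* X_1 = X (x) 1  and  X_2 = 1 (x) X  (inside A (x) End V (x) End V) *)
Definition emb1 (X : 'I_kappa -> 'I_kappa -> A) :=
  fun i j k l : 'I_kappa => (k == l)%:R * X i j.
Definition emb2 (X : 'I_kappa -> 'I_kappa -> A) :=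
  fun i j k l : 'I_kappa => (i == j)%:R * X k l.

(* P = sum_{i,j} s_j E_ij (x) E_ji *)
Definition Pmat : 'I_kappa -> 'I_kappa -> 'I_kappa -> 'I_kappa -> A :=
  fun a b c d => ((c == b) && (d == a))%:R * sgn (par b).

(* Generators: b i j r = b_ij^{(r)} for r >= 1 (the value at r = 0 is
   ignored); eps i is epsilon_i (an integer, +1 or -1).
   bser r i j = coefficient of u^{-r} in b_ij(u). *)
Definition bser (eps : 'I_kappa -> int) (b : 'I_kappa -> 'I_kappa -> nat -> A)
  (r : nat) (i j : 'I_kappa) : A :=
  if r is 0 then (i == j)%:R * (eps i)%:~R else b i j r.

(* Coefficient of u^{-r} in the matrix B(u) = sum (-1)^{|i||j|+|j|} b_ij(u) (x) E_ij *)
Definition Bcoef eps b (r : nat) (i j : 'I_kappa) : A :=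
  sgn ((par i && par j) (+) par j) * bser eps b r i j.

Definition Bsh eps b (d r : nat) (i j : 'I_kappa) : A :=
  if (d <= r)%N then Bcoef eps b (r - d) i j else 0.

(* The reflection equation
     R(u-v) B_1(u) R(u+v) B_2(v) = B_2(v) R(u+v) B_1(u) R(u-v),
   multiplied by (u-v)(u+v), i.e. with R(u) replaced by u - P:
     (u-v-P) B_1(u) (u+v-P) B_2(v) = B_2(v) (u+v-P) B_1(u) (u-v-P).
   Writing B_1(u) = sum_r beta_1(r) u^{-r}, B_2(v) = sum_s beta_2(s) v^{-s},
   with X = beta_1(r):
     (u-v-P) X (u+v-P) = u^2 X - v^2 X - u (XP+PX) + v (XP-PX) + PXP,
     (u+v-P) X (u-v-P) = u^2 X - v^2 X - u (XP+PX) + v (PX-XP) + PXP.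
   refl_lhs eps b m n / refl_rhs eps b m n are the coefficients of
   u^{2-m} v^{2-n} (m n : nat) of the two sides. *)
Definition refl_lhs eps b (m n : nat) :=
  let X d := emb1 (Bsh eps b d m) in
  let Y d := emb2 (Bsh eps b d n) in
  let P := Pmat in
  add4 (sub4 (sub4 (add4
    (mul4 (X 0%N) (Y 2%N))
    (mul4 (mul4 (mul4 P (X 2%N)) P) (Y 2%N)))
    (mul4 (X 2%N) (Y 0%N)))
    (mul4 (add4 (mul4 (X 1%N) P) (mul4 P (X 1%N))) (Y 2%N)))
    (mul4 (sub4 (mul4 (X 2%N) P) (mul4 P (X 2%N))) (Y 1%N)).

Definition refl_rhs eps b (m n : nat) :=
  let X d := emb1 (Bsh eps b d m) in
  let Y d := emb2 (Bsh eps b d n) in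
  let P := Pmat in
  add4 (sub4 (sub4 (add4
    (mul4 (Y 2%N) (X 0%N))
    (mul4 (mul4 (mul4 (Y 2%N) P) (X 2%N)) P))
    (mul4 (Y 0%N) (X 2%N)))
    (mul4 (Y 2%N) (add4 (mul4 (X 1%N) P) (mul4 P (X 1%N)))))
    (mul4 (Y 1%N) (sub4 (mul4 P (X 2%N)) (mul4 (X 2%N) P))).

Definition reflection_eq eps b : Prop :=
  forall (m n : nat) (i j k l : 'I_kappa),
    refl_lhs eps b m n i j k l = refl_rhs eps b m n i j k l.

(* Coefficient of u^{-N} in B(u) B(-u), i.e. sum_{r+t=N} (-1)^t beta(r) beta(t). *)
Definition BBneg_coef eps b (N : nat) (i j : 'I_kappa) : A :=
  \sum_(t < N.+1) (-1) ^+ t * mul2 (Bcoef eps b (N - t)) (Bcoef eps b t) i j.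

End SuperYangian.

From Pilot Require Import Defs.
From mathcomp Require Import all_boot all_algebra.
From mathcomp Require Import reals complex Rstruct.
From mathcomp Require Import zify.
From Stdlib Require Import FunctionalExtensionality.

Import GRing.Theory.
Local Open Scope ring_scope.

Set Implicit Arguments.
Unset Strict Implicit.
Unset Printing Implicit Defensive.

(* With L(u,v) = (u-v-P) B_1(u) (u+v-P) the reflection equation reads
   L(u,v) B_2(v) = B_2(v) L(u,-v), and P B_1(u) P = B_2(u).  At v = -u it becomes
     -2u B_1(u) P B_2(-u) + B_2(u) B_2(-u) = -2u B_2(-u) P B_1(u) + B_2(-u) B_2(u),
   and comparing entries (2 being invertible) shows that C(u) = B(u) B(-u) is a
   scalar f(u) with f(-u) = f(u).  Multiplying the reflection equation on the right
   by B_2(-v), and its image under v |-> -v on the left by B_2(v), computes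
   B_2(v) L(u,-v) B_2(-v) both as L(u,v) f(v) and as f(v) L(u,v).  The coefficient
   of u^(2-m) in L is B_1^(m) plus terms in B^(m-1) and B^(m-2), so induction on m
   shows that f commutes with all generators.  Neither the number of even indices
   nor eps_i = +-1 is used. *)

(* [shift x0 x d] is the coefficient sequence of [u^-d x(u)], padded with [x0]. *)
Definition shift (X : Type) (x0 : X) (x : nat -> X) (d r : nat) : X :=
  if (d <= r)%N then x (r - d)%N else x0.

Section SignedDiagonal.
Variable R : nzRingType.
Implicit Types (a : nat -> nat -> R) (K N : nat).

(* [negdiag a K] is the coefficient of [u^-K] in [a(u, -u)], for
   [a(u, v) = \sum_(m, n) a m n u^-m v^-n]. *)
Definition negdiag a K : R := \sum_(n < K.+1) (-1) ^+ n * a (K - n)%N n.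

Lemma sqrrN1 : (-1) ^+ 2 = 1 :> R.
Proof. by rewrite expr2 mulrNN mulr1. Qed.

Lemma eq_negdiag a a' K :
  (forall m n, a m n = a' m n) -> negdiag a K = negdiag a' K.
Proof. by move=> eq_a; apply: eq_bigr => n _; rewrite eq_a. Qed.

Lemma negdiagD a a' K :
  negdiag (fun m n => a m n + a' m n) K = negdiag a K + negdiag a' K.
Proof. by rewrite -big_split; apply: eq_bigr => n _; rewrite mulrDr. Qed.

Lemma negdiagN a K : negdiag (fun m n => - a m n) K = - negdiag a K.
Proof. by rewrite -sumrN; apply: eq_bigr => n _; rewrite mulrN. Qed.

Lemma negdiagMl (c : R) a K :
  negdiag (fun m n => c * a m n) K = c * negdiag a K.
Proof.
by rewrite mulr_sumr; apply: eq_bigr => n _; rewrite !mulrA (commr_sign c).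
Qed.

Lemma negdiagMn a K p : negdiag (fun m n => a m n *+ p) K = negdiag a K *+ p.
Proof. by rewrite -sumrMnl; apply: eq_bigr => n _; rewrite mulrnAr. Qed.

Lemma negdiag_swap a K : negdiag (fun m n => a n m) K = (-1) ^+ K * negdiag a K.
Proof.
rewrite /negdiag mulr_sumr (reindex_inj rev_ord_inj); apply: eq_bigr => n _ /=.
have le_nK : (n <= K)%N by rewrite -ltnS.
rewrite subSS subKn // mulrA; congr (_ * _).
by rewrite -[X in (-1) ^+ X * _](subnK le_nK) exprD -mulrA -expr2 sqrr_sign mulr1.
Qed.

Lemma negdiag_shiftl (X Y : Type) (x0 : X) (F : X -> Y -> R) x y d N :
  (forall v, F x0 v = 0) ->
  negdiag (fun m n => F (shift x0 x d m) (y n)) (d + N) =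
  negdiag (fun m n => F (x m) (y n)) N.
Proof.
move=> F0; have le_N : (N.+1 <= (d + N).+1)%N by rewrite ltnS leq_addl.
rewrite /negdiag (big_ord_widen _ (fun n => (-1) ^+ n * F (x (N - n)%N) (y n)) le_N).
rewrite [RHS]big_mkcond; apply: eq_bigr => n _ /=; rewrite /shift.
case: ltnP => [le_nN | lt_Nn]; first by rewrite -addnBA // leq_addr addKn.
rewrite ifN ?F0 ?mulr0 // -ltnNge; have := ltn_ord n; lia.
Qed.

Lemma negdiag_shiftr (X Y : Type) (y0 : Y) (F : X -> Y -> R) x y d N :
  (forall u, F u y0 = 0) ->
  negdiag (fun m n => F (x m) (shift y0 y d n)) (d + N) =
  (-1) ^+ d * negdiag (fun m n => F (x m) (y n)) N.
Proof.
move=> F0; rewrite /negdiag -addnS big_split_ord /= big1 ?add0r => [|n _]; last first.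
  by rewrite /shift leqNgt ltn_ord F0 mulr0.
rewrite mulr_sumr; apply: eq_bigr => n _ /=.
by rewrite /shift leq_addr subnDl addKn exprD mulrA.
Qed.

Lemma negdiag_shift (X Y : Type) (x0 : X) (y0 : Y) (F : X -> Y -> R) x y d1 d2 N :
  (forall v, F x0 v = 0) -> (forall u, F u y0 = 0) ->
  negdiag (fun m n => F (shift x0 x d1 m) (shift y0 y d2 n)) (d1 + d2 + N) =
  (-1) ^+ d2 * negdiag (fun m n => F (x m) (y n)) N.
Proof.
move=> F0l F0r; rewrite -addnA addnCA (@negdiag_shiftr _ _ _ F (shift x0 x d1)) //.
by rewrite negdiag_shiftl.
Qed.

End SignedDiagonal.

Section SuperTensors.
Variables (A : nzRingType) (kappa : nat) (par : 'I_kappa -> bool).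
Local Notation I := 'I_kappa.
Local Notation mx := (I -> I -> A).
Local Notation tensor := (I -> I -> I -> I -> A).
Local Notation sg := (sgn A).
Local Notation P := (Pmat A par).
Local Notation "X *t Y" := (mul4 par X Y) (at level 40, left associativity).
Implicit Types (x y : mx) (W X Y Z : tensor).

Ltac case_par := repeat match goal with |- context [par ?i] => case: (par i) end.

Lemma sgnD a b : sg (a (+) b) = sg a * sg b.
Proof. exact: signr_addb. Qed.

Lemma sgnC b (c : A) : sg b * c = c * sg b.
Proof. exact/esym/commr_sign. Qed.

Lemma sgnK b : sg b * sg b = 1.
Proof. by rewrite -expr2 sqrr_sign. Qed.

Lemma sgnMI b : injective (fun c : A => sg b * c).
Proof. by move=> x y /(congr1 (fun c => sg b * c)); rewrite !mulrA sgnK !mul1r. Qed.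

Lemma sgnM_eq0 b (c : A) : (sg b * c == 0) = (c == 0).
Proof. by rewrite /sgn mulr_sign; case: b; rewrite ?oppr_eq0. Qed.

Lemma tensor_ext X Y : (forall i j k l, X i j k l = Y i j k l) -> X = Y.
Proof. by move=> eqXY; do 4!apply: functional_extensionality => ?. Qed.

Lemma mul4Dl X Y Z : add4 X Y *t Z = add4 (X *t Z) (Y *t Z).
Proof.
apply: tensor_ext => i j k l; rewrite /add4 -big_split; apply: eq_bigr => p _.
by rewrite -big_split; apply: eq_bigr => q _; rewrite mulrDr mulrDl.
Qed.

Lemma mul4Bl X Y Z : sub4 X Y *t Z = sub4 (X *t Z) (Y *t Z).
Proof.
apply: tensor_ext => i j k l; rewrite /sub4 -sumrB; apply: eq_bigr => p _.
by rewrite -sumrB; apply: eq_bigr => q _; rewrite mulrBr mulrBl.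
Qed.

Lemma mul4Dr X Y Z : Z *t add4 X Y = add4 (Z *t X) (Z *t Y).
Proof.
apply: tensor_ext => i j k l; rewrite /add4 -big_split; apply: eq_bigr => p _.
by rewrite -big_split; apply: eq_bigr => q _; rewrite mulrDr.
Qed.

Lemma mul4Br X Y Z : Z *t sub4 X Y = sub4 (Z *t X) (Z *t Y).
Proof.
apply: tensor_ext => i j k l; rewrite /sub4 -sumrB; apply: eq_bigr => p _.
by rewrite -sumrB; apply: eq_bigr => q _; rewrite mulrBr.
Qed.

Lemma mul40 W : W *t (fun _ _ _ _ => 0) = (fun _ _ _ _ => 0).
Proof.
apply: tensor_ext => i j k l; rewrite /mul4 big1 // => p _.
by rewrite big1 // => q _; rewrite mulr0.
Qed.

Lemma mul04 W : (fun _ _ _ _ => 0) *t W = (fun _ _ _ _ => 0).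
Proof.
apply: tensor_ext => i j k l; rewrite /mul4 big1 // => p _.
by rewrite big1 // => q _; rewrite mulr0 mul0r.
Qed.

Lemma emb1_0 : emb1 (fun _ _ : I => 0 : A) = (fun _ _ _ _ => 0).
Proof. by apply: tensor_ext => i j k l; rewrite /emb1 mulr0. Qed.

Lemma emb2_0 : emb2 (fun _ _ : I => 0 : A) = (fun _ _ _ _ => 0).
Proof. by apply: tensor_ext => i j k l; rewrite /emb2 mulr0. Qed.

Lemma mul4_emb2r W y i j k l :
  (W *t emb2 y) i j k l = \sum_(q < kappa)
    sg ((par i (+) par j (+) par k (+) par q) && (par q (+) par l)) * W i j k q * y q l.
Proof.
rewrite /mul4 exchange_big; apply: eq_bigr => q _ /=.
rewrite (big_only1 j) // => [|p /negbTE ne_pj _]; last by rewrite /emb2 ne_pj !(mul0r, mulr0).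
by rewrite /emb2 eqxx mul1r; congr (sg _ * _ * _); case_par.
Qed.

Lemma mul4_emb2l W y i j k l :
  (emb2 y *t W) i j k l = \sum_(q < kappa)
    sg (((par k (+) par q) && (par i (+) par j (+) par q (+) par l))
        (+) ((par k (+) par q) && (par i (+) par j))) * y k q * W i j q l.
Proof.
rewrite /mul4 (big_only1 i) // => [|p ne_pi _]; last first.
  by rewrite big1 // => q _; rewrite /emb2 eq_sym (negbTE ne_pi) !(mul0r, mulr0).
apply: eq_bigr => q _; rewrite /emb2 eqxx mul1r.
by congr (sg _ * _ * _); case_par.
Qed.

Lemma mul4_Pr W i j k l :
  (W *t P) i j k l = sg ((par k (+) par j) && (par l (+) par j)) * sg (par j) * W i l k j.
Proof.
rewrite /mul4 (big_only1 l) // => [|p /negbTE ne_pl _]; last first.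
  by rewrite big1 // => q _; rewrite /Pmat [l == p]eq_sym ne_pl andbF !(mul0r, mulr0).
rewrite (big_only1 j) // => [|q /negbTE ne_qj _]; last by rewrite /Pmat ne_qj !(mul0r, mulr0).
rewrite /Pmat !eqxx mul1r -mulrA -(sgnC (par j)) mulrA.
by congr (sg _ * _ * _); case_par.
Qed.

Lemma mul4_Pl W i j k l :
  (P *t W) i j k l = sg ((par k (+) par i) && (par k (+) par j)) * sg (par k) * W k j i l.
Proof.
rewrite /mul4 (big_only1 k) // => [|p /negbTE ne_pk _]; last first.
  by rewrite big1 // => q _; rewrite /Pmat [k == p]eq_sym ne_pk !(mul0r, mulr0).
rewrite (big_only1 i) // => [|q /negbTE ne_qi _]; last by rewrite /Pmat ne_qi andbF !(mul0r, mulr0).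
by rewrite /Pmat !eqxx mul1r; congr (sg _ * _ * _); case_par.
Qed.

Lemma exchange_big4 (F : I -> I -> I -> I -> A) :
  \sum_p \sum_q \sum_p' \sum_q' F p q p' q' = \sum_p' \sum_q' \sum_p \sum_q F p q p' q'.
Proof.
under eq_bigr do rewrite exchange_big.
rewrite exchange_big; apply: eq_bigr => p' _.
by under eq_bigr do rewrite exchange_big; rewrite exchange_big.
Qed.

Lemma sgn_assoc e1 e2 e3 e4 (x y z : A) : e1 (+) e2 = e3 (+) e4 ->
  sg e1 * (sg e2 * x * y) * z = sg e3 * x * (sg e4 * y * z).
Proof.
by move=> e; rewrite !mulrA -sgnD e sgnD -[sg e3 * sg e4 * x]mulrA (sgnC e4 x) !mulrA.
Qed.

Lemma mul4A X Y Z : X *t Y *t Z = X *t (Y *t Z).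
Proof.
apply: tensor_ext => i j k l; rewrite /mul4.
under eq_bigr do under eq_bigr do rewrite mulr_sumr mulr_suml;
  under [RHS]eq_bigr do under eq_bigr do rewrite mulr_sumr.
under eq_bigr do under eq_bigr do under eq_bigr do rewrite mulr_sumr mulr_suml;
  under [RHS]eq_bigr do under eq_bigr do under eq_bigr do rewrite mulr_sumr.
rewrite exchange_big4; do 4!(apply: eq_bigr => ? _).
by apply: sgn_assoc; case_par.
Qed.

Ltac gather_signs :=
  rewrite ?mulrA; repeat (rewrite -?sgnD; rewrite -(sgnC _ _) ?mulrA); rewrite -?sgnD.

Lemma emb2M x y : emb2 x *t emb2 y = emb2 (mul2 par x y).
Proof.
apply: tensor_ext => i j k l; rewrite mul4_emb2r /emb2 /mul2 mulr_sumr.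
apply: eq_bigr => q _; case: (i =P j) => [->|_]; last by rewrite !(mul0r, mulr0).
by rewrite !mul1r; congr (sg _ * _ * _); case_par.
Qed.

Lemma Pconj_emb1 x : P *t emb1 x *t P = emb2 x.
Proof.
apply: tensor_ext => i j k l; rewrite mul4_Pr mul4_Pl /emb1 /emb2.
case: (i =P j) => [->|_]; last by rewrite !(mul0r, mulr0).
by gather_signs; rewrite [X in sg X](_ : _ = false) /sgn ?expr0 ?mul1r //; case_par.
Qed.

Lemma mul4_emb1_P_emb2 x y i j k l :
  (emb1 x *t P *t emb2 y) i j k l = (k == j)%:R * sg (par j) * mul2 par x y i l.
Proof.
rewrite mul4_emb2r /mul2 mulr_sumr; apply: eq_bigr => q _.
rewrite mul4_Pr /emb1; case: (k =P j) => [->|_]; last by rewrite !(mul0r, mulr0).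
by rewrite !mul1r; gather_signs; congr (sg _ * _ * _); case_par.
Qed.

Lemma mul4_emb2_P_emb1 x y i j k l :
  (emb2 y *t (P *t emb1 x)) i j k l = (i == l)%:R *
    sg ((par k (+) par j) && (par i (+) par j)) * sg (par j) * mul2 par y x k j.
Proof.
rewrite mul4_emb2l /mul2 mulr_sumr; apply: eq_bigr => q _.
rewrite mul4_Pl /emb1; case: (i =P l) => [->|_]; last by rewrite !(mul0r, mulr0).
by rewrite !mul1r; gather_signs; congr (sg _ * _ * _); case_par.
Qed.

Lemma mul4_emb2_scalar_r W y c i j k l :
  (forall p q, y p q = (p == q)%:R * c) -> (W *t emb2 y) i j k l = W i j k l * c.
Proof.
move=> y_scalar; rewrite mul4_emb2r (big_only1 l) // => [|q /negbTE ne_ql _].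
  by rewrite y_scalar eqxx mul1r addbb andbF /sgn expr0 mul1r.
by rewrite y_scalar ne_ql !(mul0r, mulr0).
Qed.

Lemma mul4_emb2_scalar_l W y c i j k l :
  (forall p q, y p q = (p == q)%:R * c) -> (emb2 y *t W) i j k l = c * W i j k l.
Proof.
move=> y_scalar; rewrite mul4_emb2l (big_only1 k) // => [|q ne_qk _].
  by rewrite y_scalar eqxx mul1r addbb /sgn expr0 mul1r.
by rewrite y_scalar eq_sym (negbTE ne_qk) !(mul0r, mulr0).
Qed.

Lemma negdiag_mul4_emb2r W (xs : nat -> nat -> mx) K i j k l :
  negdiag (fun a n => (W *t emb2 (xs a n)) i j k l) K =
  (W *t emb2 (fun p q => negdiag (fun a n => xs a n p q) K)) i j k l.
Proof.
rewrite mul4_emb2r /negdiag; under eq_bigr do rewrite mul4_emb2r mulr_sumr.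
rewrite exchange_big; apply: eq_bigr => q _; rewrite mulr_sumr.
by apply: eq_bigr => n _; rewrite !mulrA (commr_sign (_ * W i j k q)) !mulrA.
Qed.

Lemma negdiag_mul4_emb2l W (xs : nat -> nat -> mx) K i j k l :
  negdiag (fun a n => (emb2 (xs a n) *t W) i j k l) K =
  (emb2 (fun p q => negdiag (fun a n => xs a n p q) K) *t W) i j k l.
Proof.
rewrite mul4_emb2l /negdiag; under eq_bigr do rewrite mul4_emb2l mulr_sumr.
rewrite exchange_big; apply: eq_bigr => q _; rewrite mulr_sumr mulr_suml.
by apply: eq_bigr => n _; rewrite !mulrA (commr_sign (sg _)).
Qed.

Definition anticommP x : tensor := add4 (emb1 x *t P) (P *t emb1 x).
Definition commP x : tensor := sub4 (emb1 x *t P) (P *t emb1 x).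

Lemma anticommP0 : anticommP (fun _ _ => 0) = (fun _ _ _ _ => 0).
Proof.
rewrite /anticommP emb1_0 mul04 mul40.
by apply: tensor_ext => i j k l; rewrite /add4 addr0.
Qed.

Lemma commP0 : commP (fun _ _ => 0) = (fun _ _ _ _ => 0).
Proof.
rewrite /commP emb1_0 mul04 mul40.
by apply: tensor_ext => i j k l; rewrite /sub4 subr0.
Qed.

Lemma mul4_anticommP_add_commP x Z i j k l :
  (anticommP x *t Z) i j k l + (commP x *t Z) i j k l = (emb1 x *t P *t Z) i j k l *+ 2.
Proof. by rewrite mul4Dl mul4Bl /add4 /sub4 addrACA subrr addr0 mulr2n. Qed.

Lemma mul4_anticommP_sub_commP x Z i j k l :
  (Z *t anticommP x) i j k l - (Z *t commP x) i j k l = (Z *t (P *t emb1 x)) i j k l *+ 2.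
Proof. by rewrite mul4Dr mul4Br /add4 /sub4 opprB addrC addrA subrK mulr2n. Qed.

Section Commutant.
Variable c : A.

Definition mx_comm x := forall p q, GRing.comm c (x p q).
Definition tensor_comm W := forall i j k l, GRing.comm c (W i j k l).

Lemma tensor_comm_mul X Y : tensor_comm X -> tensor_comm Y -> tensor_comm (X *t Y).
Proof.
move=> cX cY i j k l; apply: commr_sum => p _; apply: commr_sum => q _.
by apply: commrM; [apply: commrM; [exact/esym/sgnC|]|].
Qed.

Lemma tensor_comm_P : tensor_comm P.
Proof. by move=> i j k l; apply: commrM; [exact: commr_nat | exact/esym/sgnC]. Qed.

Lemma tensor_comm_emb1 x : mx_comm x -> tensor_comm (emb1 x).
Proof. by move=> cx i j k l; apply: commrM; [exact: commr_nat | exact: cx]. Qed.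

Lemma tensor_comm_emb2 x : mx_comm x -> tensor_comm (emb2 x).
Proof. by move=> cx i j k l; apply: commrM; [exact: commr_nat | exact: cx]. Qed.

Lemma tensor_comm_anticommP x : mx_comm x -> tensor_comm (anticommP x).
Proof.
move=> /tensor_comm_emb1 cx i j k l; apply: commrD;
  by apply: tensor_comm_mul => //; exact: tensor_comm_P.
Qed.

Lemma tensor_comm_commP x : mx_comm x -> tensor_comm (commP x).
Proof.
move=> /tensor_comm_emb1 cx i j k l; apply: commrB;
  by apply: tensor_comm_mul => //; exact: tensor_comm_P.
Qed.

End Commutant.

End SuperTensors.

Section ReflectionEquation.
Variables (A : nzRingType) (kappa : nat) (par : 'I_kappa -> bool).
Variables (eps : 'I_kappa -> int) (b : 'I_kappa -> 'I_kappa -> nat -> A).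
Local Notation I := 'I_kappa.
Local Notation mx := (I -> I -> A).
Local Notation tensor := (I -> I -> I -> I -> A).
Local Notation P := (Pmat A par).
Local Notation "X *t Y" := (mul4 par X Y) (at level 40, left associativity).
Local Notation Bc := (Bcoef par eps b).
Local Notation Bsh := (Bsh par eps b).
Local Notation anticommP := (anticommP par).
Local Notation commP := (commP par).

Lemma BshE : Bsh = shift (fun _ _ => 0) Bc.
Proof. by do 4!apply: functional_extensionality => ?; rewrite /Defs.Bsh /shift; case: ifP. Qed.

Lemma Bsh0 m : Bsh 0 m = Bc m.
Proof. by rewrite BshE /shift subn0. Qed.

Lemma refl_lhsE m n : refl_lhs par eps b m n =
  add4 (sub4 (sub4 (add4
    (emb1 (Bsh 0 m) *t emb2 (Bsh 2 n))
    (emb2 (Bsh 2 m) *t emb2 (Bsh 2 n)))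
    (emb1 (Bsh 2 m) *t emb2 (Bsh 0 n)))
    (anticommP (Bsh 1 m) *t emb2 (Bsh 2 n)))
    (commP (Bsh 2 m) *t emb2 (Bsh 1 n)).
Proof. by rewrite -(Pconj_emb1 par (Bsh 2 m)). Qed.

Lemma refl_rhsE m n : refl_rhs par eps b m n =
  sub4 (sub4 (sub4 (add4
    (emb2 (Bsh 2 n) *t emb1 (Bsh 0 m))
    (emb2 (Bsh 2 n) *t emb2 (Bsh 2 m)))
    (emb2 (Bsh 0 n) *t emb1 (Bsh 2 m)))
    (emb2 (Bsh 2 n) *t anticommP (Bsh 1 m)))
    (emb2 (Bsh 1 n) *t commP (Bsh 2 m)).
Proof.
rewrite /refl_rhs /= (mul4A par _ P) (mul4A par _ (P *t _) P) Pconj_emb1 /commP !mul4Br.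
by apply: tensor_ext => i j k l; rewrite /add4 /sub4 opprB.
Qed.

Lemma negdiag_shift_mul4l (W : mx -> tensor) d1 d2 N i j k l :
  W (fun _ _ => 0) = (fun _ _ _ _ => 0) ->
  negdiag (fun m n => (W (Bsh d1 m) *t emb2 (Bsh d2 n)) i j k l) (d1 + d2 + N) =
  (-1) ^+ d2 * negdiag (fun m n => (W (Bc m) *t emb2 (Bc n)) i j k l) N.
Proof.
move=> W0; rewrite BshE (negdiag_shift (F := fun x y => (W x *t emb2 y) i j k l)) //.
  by move=> y; rewrite W0 mul04.
by move=> x; rewrite emb2_0 mul40.
Qed.

Lemma negdiag_shift_mul4r (W : mx -> tensor) d1 d2 N i j k l :
  W (fun _ _ => 0) = (fun _ _ _ _ => 0) ->
  negdiag (fun m n => (emb2 (Bsh d1 m) *t W (Bsh d2 n)) i j k l) (d1 + d2 + N) =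
  (-1) ^+ d2 * negdiag (fun m n => (emb2 (Bc m) *t W (Bc n)) i j k l) N.
Proof.
move=> W0; rewrite BshE (negdiag_shift (F := fun x y => (emb2 x *t W y) i j k l)) //.
  by move=> y; rewrite emb2_0 mul04.
by move=> x; rewrite W0 mul40.
Qed.

End ReflectionEquation.

Section ScalarBBneg.
Variables (A : nzRingType) (kappa : nat) (par : 'I_kappa -> bool).
Variables (eps : 'I_kappa -> int) (b : 'I_kappa -> 'I_kappa -> nat -> A).
Local Notation I := 'I_kappa.
Local Notation sg := (sgn A).
Local Notation "X *t Y" := (mul4 par X Y) (at level 40, left associativity).
Local Notation Bsh := (Bsh par eps b).
Local Notation C := (BBneg_coef par eps b).

Lemma negdiag_refl_lhs M i j k l :
  negdiag (fun m n => refl_lhs par eps b m n i j k l) M.+3 =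
  (i == j)%:R * negdiag (fun m n => mul2 par (Bsh 2 m) (Bsh 2 n) k l) M.+3
  - ((k == j)%:R * sg (par j) * C M i l) *+ 2.
Proof.
under eq_negdiag do rewrite refl_lhsE emb2M /add4 /sub4 [emb2 _ i j k l]/emb2.
rewrite !(negdiagD, negdiagN) negdiagMl.
rewrite !negdiag_shift_mul4l ?emb1_0 ?anticommP0 ?commP0 //.
rewrite sqrrN1 expr0 expr1 !mul1r mulN1r [negdiag _ M.+1 + _]addrC addrK.
rewrite -addrA -opprD -negdiagD; congr (_ - _).
under eq_negdiag do rewrite mul4_anticommP_add_commP mul4_emb1_P_emb2.
by rewrite negdiagMn negdiagMl.
Qed.

Lemma negdiag_refl_rhs M i j k l :
  negdiag (fun m n => refl_rhs par eps b m n i j k l) M.+3 = (-1) ^+ M.+3 *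
  ((i == j)%:R * negdiag (fun m n => mul2 par (Bsh 2 m) (Bsh 2 n) k l) M.+3
   + ((i == l)%:R * sg ((par k (+) par j) && (par i (+) par j)) * sg (par j) * C M k j) *+ 2).
Proof.
rewrite -[LHS](signrMK M.+3) -negdiag_swap.
under eq_negdiag do rewrite refl_rhsE emb2M /add4 /sub4 [emb2 _ i j k l]/emb2.
rewrite !(negdiagD, negdiagN) negdiagMl.
rewrite !negdiag_shift_mul4r ?emb1_0 ?anticommP0 ?commP0 //.
rewrite sqrrN1 expr0 expr1 !mul1r mulN1r opprK [negdiag _ M.+1 + _]addrC addrK.
rewrite -addrA -negdiagN -negdiagD; congr (_ * (_ + _)).
under eq_negdiag do rewrite mul4_anticommP_sub_commP mul4_emb2_P_emb1.
by rewrite negdiagMn negdiagMl.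
Qed.

Hypothesis refl : reflection_eq par eps b.
Hypothesis two_reg : forall x : A, x *+ 2 = 0 -> x = 0.

(* The reflection equation at v = -u, coefficient of u^-(M+1). *)
Lemma BBneg_refl M i j k l :
  (i == j)%:R * negdiag (fun m n => mul2 par (Bsh 2 m) (Bsh 2 n) k l) M.+3
  - ((k == j)%:R * sg (par j) * C M i l) *+ 2 = (-1) ^+ M.+3 *
  ((i == j)%:R * negdiag (fun m n => mul2 par (Bsh 2 m) (Bsh 2 n) k l) M.+3
   + ((i == l)%:R * sg ((par k (+) par j) && (par i (+) par j)) * sg (par j) * C M k j) *+ 2).
Proof.
by rewrite -negdiag_refl_lhs -negdiag_refl_rhs; apply: eq_negdiag => m n; rewrite refl.
Qed.

Lemma sgnMn2_inj e (x y : A) : (sg e * x) *+ 2 = (sg e * y) *+ 2 -> x = y.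
Proof.
move=> /eqP; rewrite -subr_eq0 -mulrnBl -mulrBr => /eqP /two_reg /eqP.
by rewrite sgnM_eq0 subr_eq0 => /eqP.
Qed.

Lemma BBneg_offdiag M i l : i != l -> C M i l = 0.
Proof.
move=> /negbTE ne_il; have := BBneg_refl M i l l l.
rewrite ne_il eqxx !mul0r mul1r sub0r add0r mul0rn mulr0 => /eqP.
by rewrite oppr_eq0 => /eqP /two_reg /eqP; rewrite sgnM_eq0 => /eqP.
Qed.

Lemma BBneg_diag M i j : i != j -> C M i i = (-1) ^+ M * C M j j.
Proof.
move=> /negbTE ne_ij; have := BBneg_refl M i j j i.
rewrite ne_ij !eqxx addbb /= !mul0r !mul1r sub0r add0r !exprS !mulN1r opprK mulNr.
move=> /oppr_inj; rewrite mulrnAr mulrA -(commr_sign (sg (par j))) -mulrA.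
exact: sgnMn2_inj.
Qed.

Lemma BBneg_odd M i : odd M -> C M i i = 0.
Proof.
move=> odd_M; have := BBneg_refl M i i i i.
rewrite !eqxx addbb /= !mul1r -signr_odd /= negbK odd_M expr0 mul1r.
move=> /addrI /eqP; rewrite eq_sym -subr_eq0 opprK -mulr2n => /eqP /two_reg /two_reg /eqP.
by rewrite sgnM_eq0 => /eqP.
Qed.

Lemma BBneg_scalar : exists f : nat -> A,
  (forall r, odd r -> f r = 0) /\ (forall N i j, C N i j = (i == j)%:R * f N).
Proof.
have [i0 _|no_index] := pickP (@predT I); last first.
  by exists (fun _ => 0); split=> // N i; move: (no_index i).
exists (fun N => C N i0 i0); split=> [r /BBneg_odd //|N i j].
have [<-|/BBneg_offdiag -> //] := eqVneq i j; last by rewrite mul0r.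
rewrite mul1r; have [->//|/BBneg_diag ->] := eqVneq i i0.
case odd_N: (odd N); first by rewrite BBneg_odd ?mulr0.
by rewrite -signr_odd odd_N mul1r.
Qed.

End ScalarBBneg.

Section CentralBBneg.
Variables (A : nzRingType) (kappa : nat) (par : 'I_kappa -> bool).
Variables (eps : 'I_kappa -> int) (b : 'I_kappa -> 'I_kappa -> nat -> A).
Variable f : nat -> A.
Hypothesis BBneg_f : forall N i j, BBneg_coef par eps b N i j = (i == j)%:R * f N.
Local Notation I := 'I_kappa.
Local Notation tensor := (I -> I -> I -> I -> A).
Local Notation sg := (sgn A).
Local Notation "X *t Y" := (mul4 par X Y) (at level 40, left associativity).
Local Notation Bc := (Bcoef par eps b).
Local Notation Bsh := (Bsh par eps b).
Local Notation anticommP := (anticommP par).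
Local Notation commP := (commP par).
Implicit Types (W : tensor).

Lemma negdiag_mul4_BBneg W d N i j k l :
  negdiag (fun a n => (W *t (emb2 (Bsh d a) *t emb2 (Bc n))) i j k l) (d + N) =
  W i j k l * f N.
Proof.
rewrite BshE (negdiag_shiftl (F := fun x y => (W *t (emb2 x *t emb2 y)) i j k l)) /=.
  under eq_negdiag do rewrite emb2M.
  by rewrite negdiag_mul4_emb2r; apply: mul4_emb2_scalar_r => p q; apply: BBneg_f.
by move=> y; rewrite emb2_0 mul04 mul40.
Qed.

Lemma negdiag_BBneg_mul4 W d N i j k l :
  negdiag (fun a n => (emb2 (Bc a) *t emb2 (Bsh d n) *t W) i j k l) (d + N) =
  (-1) ^+ d * (f N * W i j k l).
Proof.
rewrite BshE (negdiag_shiftr (F := fun x y => (emb2 x *t emb2 y *t W) i j k l)) /=.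
  under eq_negdiag do rewrite emb2M.
  rewrite negdiag_mul4_emb2l; congr (_ * _).
  by apply: mul4_emb2_scalar_l => p q; apply: BBneg_f.
by move=> x; rewrite emb2_0 mul40 mul04.
Qed.

Lemma negdiag_sandwich_shiftl W d N i j k l :
  negdiag (fun a n => (emb2 (Bsh d a) *t W *t emb2 (Bc n)) i j k l) (d + N) =
  negdiag (fun a n => (emb2 (Bc a) *t W *t emb2 (Bc n)) i j k l) N.
Proof.
rewrite BshE (negdiag_shiftl (F := fun x y => (emb2 x *t W *t emb2 y) i j k l)) //.
by move=> y; rewrite emb2_0 !mul04.
Qed.

Lemma negdiag_sandwich_shiftr W d N i j k l :
  negdiag (fun a n => (emb2 (Bc a) *t W *t emb2 (Bsh d n)) i j k l) (d + N) =
  (-1) ^+ d * negdiag (fun a n => (emb2 (Bc a) *t W *t emb2 (Bc n)) i j k l) N.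
Proof.
rewrite BshE (negdiag_shiftr (F := fun x y => (emb2 x *t W *t emb2 y) i j k l)) //.
by move=> x; rewrite emb2_0 mul40.
Qed.

Lemma negdiag_refl_lhs_mulr m s i j k l :
  negdiag (fun a n => (refl_lhs par eps b m a *t emb2 (Bc n)) i j k l) s.+2 =
  emb1 (Bsh 0 m) i j k l * f s + emb2 (Bsh 2 m) i j k l * f s
  - emb1 (Bsh 2 m) i j k l * f s.+2 - anticommP (Bsh 1 m) i j k l * f s
  + commP (Bsh 2 m) i j k l * f s.+1.
Proof.
under eq_negdiag do rewrite refl_lhsE mul4Dl 2!mul4Bl mul4Dl !mul4A /add4 /sub4.
by rewrite !(negdiagD, negdiagN) !negdiag_mul4_BBneg.
Qed.

Lemma negdiag_refl_rhs_mull m s i j k l :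
  negdiag (fun a n => (emb2 (Bc a) *t refl_rhs par eps b m n) i j k l) s.+2 =
  f s * emb1 (Bsh 0 m) i j k l + f s * emb2 (Bsh 2 m) i j k l
  - f s.+2 * emb1 (Bsh 2 m) i j k l - f s * anticommP (Bsh 1 m) i j k l
  + f s.+1 * commP (Bsh 2 m) i j k l.
Proof.
under eq_negdiag do rewrite refl_rhsE 3!mul4Br mul4Dr -!mul4A /add4 /sub4.
rewrite !(negdiagD, negdiagN) !negdiag_BBneg_mul4.
by rewrite sqrrN1 expr0 expr1 !mul1r mulN1r opprK.
Qed.

(* Both sides are the coefficient of v^-s in B_2(v) L(u,-v) B_2(-v). *)
Lemma negdiag_refl_rhs_mulr m s i j k l :
  negdiag (fun a n => (refl_rhs par eps b m a *t emb2 (Bc n)) i j k l) s.+2 =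
  negdiag (fun a n => (emb2 (Bc a) *t refl_lhs par eps b m n) i j k l) s.+2.
Proof.
under eq_negdiag do rewrite refl_rhsE 3!mul4Bl mul4Dl /add4 /sub4.
under [RHS]eq_negdiag do rewrite refl_lhsE mul4Dr 2!mul4Br mul4Dr -!mul4A /add4 /sub4.
rewrite !(negdiagD, negdiagN) !negdiag_sandwich_shiftl !negdiag_sandwich_shiftr.
by rewrite sqrrN1 expr0 expr1 !mul1r mulN1r.
Qed.

Hypothesis refl : reflection_eq par eps b.

(* L(u,v) f(v) = f(v) L(u,v), coefficient of u^(2-m) v^-s. *)
Lemma refl_comm_BBneg m s i j k l :
  emb1 (Bsh 0 m) i j k l * f s + emb2 (Bsh 2 m) i j k l * f s
  - emb1 (Bsh 2 m) i j k l * f s.+2 - anticommP (Bsh 1 m) i j k l * f s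
  + commP (Bsh 2 m) i j k l * f s.+1 =
  f s * emb1 (Bsh 0 m) i j k l + f s * emb2 (Bsh 2 m) i j k l
  - f s.+2 * emb1 (Bsh 2 m) i j k l - f s * anticommP (Bsh 1 m) i j k l
  + f s.+1 * commP (Bsh 2 m) i j k l.
Proof.
have reflE : refl_lhs par eps b = refl_rhs par eps b.
  by do 6!apply: functional_extensionality => ?; apply: refl.
rewrite -negdiag_refl_lhs_mulr -negdiag_refl_rhs_mull.
by rewrite reflE negdiag_refl_rhs_mulr reflE.
Qed.

Lemma Bcoef_comm_f m s i j : GRing.comm (f s) (Bc m i j).
Proof.
elim/ltn_ind: m s i j => m IH s i j.
have Bsh_comm d s' : (0 < d)%N -> mx_comm (f s') (Bsh d m).
  move=> d_gt0 p q; rewrite /Defs.Bsh; case: ifP => [le_dm|_]; last exact: commr0.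
  by apply: IH; rewrite ltn_subrL d_gt0 (leq_trans d_gt0 le_dm).
move: (refl_comm_BBneg m s i j i i).
rewrite -(tensor_comm_emb2 (Bsh_comm 2 s isT) i j i i).
rewrite -(tensor_comm_emb1 (Bsh_comm 2 s.+2 isT) i j i i).
rewrite -(tensor_comm_anticommP par (Bsh_comm 1 s isT) i j i i).
rewrite -(tensor_comm_commP par (Bsh_comm 2 s.+1 isT) i j i i).
by move=> /addIr /addIr /addIr /addIr; rewrite Bsh0 /emb1 eqxx mul1r.
Qed.

Lemma generator_comm_f r i j t : (0 < t)%N -> f r * b i j t = b i j t * f r.
Proof.
case: t => // t _; have := Bcoef_comm_f t.+1 r i j.
by rewrite /GRing.comm /Bcoef /bser mulrA -sgnC -!mulrA => /sgnMI.
Qed.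

End CentralBBneg.

Lemma lmod_no2torsion (F : numFieldType) (V : lmodType F) (x : V) : x *+ 2 = 0 -> x = 0.
Proof.
have two_neq0 : 2%:R != 0 :> F by rewrite Num.Theory.pnatr_eq0.
by move=> x2; rewrite -[x]scale1r -(mulVf two_neq0) -scalerA scaler_nat x2 scaler0.
Qed.

Unset Implicit Arguments.

Theorem proposition3p2 (m n : nat) (par : 'I_(m + n) -> bool)
  (Hpar : #|[set i | ~~ par i]| = m)
  (eps : 'I_(m + n) -> int) (Heps : forall i, eps i = 1 \/ eps i = -1)
  (A : algType CC) (b : 'I_(m + n) -> 'I_(m + n) -> nat -> A)
  (Hrefl : reflection_eq par eps b) :
  exists f : nat -> A,
    (forall r : nat, odd r -> f r = 0) /\
    (forall (r : nat) (i j : 'I_(m + n)) (t : nat), (0 < t)%N ->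
        f r * b i j t = b i j t * f r) /\
    (forall (N : nat) (i j : 'I_(m + n)),
        BBneg_coef par eps b N i j = (i == j)%:R * f N).
Proof.
have [f [f_odd BBneg_f]] := BBneg_scalar Hrefl (@lmod_no2torsion _ A).
by exists f; split=> //; split=> // r i j t; apply: generator_comm_f.
Qed.
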